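(* Let $m,n,s,k,c$ be positive integers with $s$ or $k$ odd, and let $\Gamma$ be an abelian group of order $nkc$ having exactly one involution. Then there is no $\mathrm{MRS}_\Gamma(m,n;s,k;c)$.
   Context: For positive integers $m,n,s,k,c$ and an abelian group $\Gamma$ of order $nkc$, an $\mathrm{MRS}_\Gamma(m,n;s,k;c)$ is a set of $c$ partially filled $m\times n$ arrays (some cells may be empty) with entries in $\Gamma$ such that: every element of $\Gamma$ appears exactly once and in a unique array; in every array each row contains exactly $s$ filled cells and each column contains exactly $k$ filled cells; and there exist $\omega,\delta\in\Gamma$ such that in every array the sum of the entries of each row is $\omega$ and the sum of the entries of each column is $\delta$. An involution is an element of order $2$. *)

From HB Require Import structures.
From mathcomp Require Import all_boot all_order all_algebra.
Set Implicit Arguments. Unset Strict Implicit. Unset Printing Implicit Defensive.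
Import GRing.Theory.
Local Open Scope ring_scope.

(* An abelian group Gamma is modelled as a finite Z-module (additive notation).
   A family of c partially filled m x n arrays with entries in G is a function
   A : 'I_c -> 'I_m -> 'I_n -> option G  (None = empty cell). *)

Definition arrays (G : Type) (m n c : nat) := 'I_c -> 'I_m -> 'I_n -> option G.

Definition cellv (G : zmodType) (x : option G) : G := odflt 0 x.

Definition is_MRS (G : finZmodType) (m n s k c : nat) (A : arrays G m n c) : Prop :=
  [/\
      forall g : G, #|[set t : 'I_c * 'I_m * 'I_n | A t.1.1 t.1.2 t.2 == Some g]| = 1%N,
      forall (a : 'I_c) (i : 'I_m), #|[set j : 'I_n | A a i j != None]| = s,
      forall (a : 'I_c) (j : 'I_n), #|[set i : 'I_m | A a i j != None]| = k &
      exists omega delta : G,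
        (forall (a : 'I_c) (i : 'I_m), \sum_(j < n) cellv (A a i j) = omega) /\
        (forall (a : 'I_c) (j : 'I_n), \sum_(i < m) cellv (A a i j) = delta)].

Definition involutions (G : finZmodType) : {set G} :=
  [set x : G | (x != 0) && (x + x == 0)].

(* The sum [S] of all elements of a finite abelian group is the sum of its
   elements of order at most 2, the others cancelling in pairs [x, -x]; with a
   unique involution [S] is that involution, so [S <> 0] and [2 S = 0].
   In an MRS the entries exhaust the group, so summing row by row and column by
   column gives [S = c m omega = c n delta], while counting filled cells gives
   [c m s = c n k = |G|].  If [s] is odd, [S = s S = (c m s) omega = |G| omega = 0];
   if [k] is odd, [S = k S = (c n k) delta = 0]. *)
From HB Require Import structures.
From mathcomp Require Import all_boot all_order all_algebra.
From mathcomp Require Import fingroup cyclic.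
Set Implicit Arguments. Unset Strict Implicit. Unset Printing Implicit Defensive.
Import GRing.Theory.
Local Open Scope ring_scope.

Lemma mulrn_card (G : finZmodType) (x : G) : x *+ #|G| = 0.
Proof.
by rewrite -FinRing.zmodXgE -cardsT (@expg_cardG _ [set: G]%G) ?inE.
Qed.

Lemma mulrn_odd (V : nmodType) (x : V) (t : nat) : x *+ 2 = 0 -> odd t -> x *+ t = x.
Proof.
move=> x2 odd_t.
by rewrite -{1}[t]odd_double_half odd_t mulrnDr -mul2n mulrnA x2 mul0rn addr0.
Qed.

Lemma sumr_not_2torsion (G : finZmodType) : \sum_(x : G | x + x != 0) x = 0.
Proof.
(* Ranking [x] against [-x] picks one representative in each pair [{x, -x}]. *)
pose r (x : G) : nat := enum_rank x.
rewrite (bigID (fun x => r x < r (- x))%N) /=.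
rewrite [X in _ + X](reindex_inj (@oppr_inj G)) /= sumrN.
apply/eqP; rewrite subr_eq0; apply/eqP/eq_bigl => x.
rewrite -opprD oppr_eq0 opprK; have [//|x2] := eqVneq (x + x) 0.
rewrite /= -leqNgt [RHS]leq_eqVlt orb_idl // => /eqP/val_inj/enum_rank_inj/eqP.
by rewrite -addr_eq0 (negbTE x2).
Qed.

Lemma sumr_finZmod_involutions (G : finZmodType) : \sum_(x : G) x = \sum_(x in involutions G) x.
Proof.
rewrite (bigID (fun x : G => x + x == 0)) /= sumr_not_2torsion addr0.
rewrite (bigD1 0) ?addr0 //= add0r; apply: eq_bigl => x.
by rewrite inE andbC.
Qed.

Lemma sumr_finZmod_unique_involution (G : finZmodType) :
  #|involutions G| = 1%N -> \sum_(x : G) x \in involutions G.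
Proof.
by move=> /eqP/cards1P[i invG]; rewrite sumr_finZmod_involutions invG big_set1 set11.
Qed.

Lemma cellvE (G : finZmodType) (x : option G) : cellv x = \sum_(g : G | x == Some g) g.
Proof.
case: x => [h|] /=; last by rewrite big_pred0.
by rewrite (big_pred1 h) // => g; rewrite eq_sym.
Qed.

Lemma sum_cellv_exact_cover (T : finType) (G : finZmodType) (f : T -> option G) :
  (forall g, #|[set t | f t == Some g]| = 1%N) -> \sum_t cellv (f t) = \sum_(g : G) g.
Proof.
move=> fibre1; under eq_bigr do rewrite cellvE.
rewrite (exchange_big_dep xpredT) //=; apply: eq_bigr => g _.
rewrite (eq_bigl [in [set t | f t == Some g]]) ?sumr_const ?fibre1 // => t.
by rewrite inE.
Qed.

Lemma card_set_sum_nat (T : finType) (P : pred T) : #|[set x | P x]| = (\sum_x P x)%N.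
Proof. by rewrite -sum1dep_card big_mkcond. Qed.

Lemma natmulE (w t : nat) : w *+ t = (w * t)%N.
Proof. by rewrite -mulr_natr natn. Qed.

Lemma sum3_const_rows (V : nmodType) (c m n : nat) (F : 'I_c -> 'I_m -> 'I_n -> V) (w : V) :
  (forall a i, \sum_j F a i j = w) -> \sum_a \sum_i \sum_j F a i j = w *+ (c * m).
Proof.
move=> rowF; under eq_bigr do under eq_bigr do rewrite rowF.
under eq_bigr do rewrite sumr_const card_ord.
by rewrite sumr_const card_ord -mulrnA mulnC.
Qed.

Lemma sum3_const_cols (V : nmodType) (c m n : nat) (F : 'I_c -> 'I_m -> 'I_n -> V) (d : V) :
  (forall a j, \sum_i F a i j = d) -> \sum_a \sum_i \sum_j F a i j = d *+ (c * n).
Proof.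
move=> colF; under eq_bigr do rewrite exchange_big /=.
exact: (@sum3_const_rows _ _ _ _ (fun a j i => F a i j) _ colF).
Qed.

Section MagicRectangleSets.
Variables (G : finZmodType) (m n s k c : nat) (A : arrays G m n c).

Lemma sum3_cellv_cover :
  (forall g : G, #|[set t : 'I_c * 'I_m * 'I_n | A t.1.1 t.1.2 t.2 == Some g]| = 1%N) ->
  \sum_a \sum_i \sum_j cellv (A a i j) = \sum_(x : G) x.
Proof.
move=> cover; rewrite -(sum_cellv_exact_cover cover) pair_bigA.
by rewrite (pair_bigA _ (fun p j => cellv (A p.1 p.2 j))).
Qed.

Lemma MRS_filled_count :
  (forall a i, #|[set j | A a i j != None]| = s) ->
  (forall a j, #|[set i | A a i j != None]| = k) ->
  (c * m * s = c * n * k)%N.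
Proof.
move=> rows cols; pose filled a i j : nat := A a i j != None.
have by_rows : (\sum_a \sum_i \sum_j filled a i j)%N = s *+ (c * m).
  by apply: sum3_const_rows => a i; rewrite -(rows a i) card_set_sum_nat.
have by_cols : (\sum_a \sum_i \sum_j filled a i j)%N = k *+ (c * n).
  by apply: sum3_const_cols => a j; rewrite -(cols a j) card_set_sum_nat.
by rewrite mulnC -natmulE -by_rows by_cols natmulE mulnC.
Qed.

End MagicRectangleSets.

Theorem corollary3p7 (G : finZmodType) (m n s k c : nat) :
  (0 < m)%N -> (0 < n)%N -> (0 < s)%N -> (0 < k)%N -> (0 < c)%N ->
  odd s || odd k ->
  #|G| = (n * k * c)%N ->
  #|involutions G| = 1%N ->
  ~ exists A : arrays G m n c, is_MRS s k A.
Proof.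
move=> _ _ _ _ _ odd_sk cardG inv1 [A [cover rows cols [om [de [row_sum col_sum]]]]].
have /[!inE]/andP[/eqP + /eqP S2] := sumr_finZmod_unique_involution inv1; apply.
have S_cells := sum3_cellv_cover cover.
set S := \sum_(x : G) x in S2 S_cells *.
have {}S2 : S *+ 2 = 0 by rewrite mulr2n.
have S_rows : S = om *+ (c * m) by rewrite -S_cells; apply: sum3_const_rows.
have S_cols : S = de *+ (c * n) by rewrite -S_cells; apply: sum3_const_cols.
have cardG' : (c * n * k)%N = #|G| by rewrite cardG [RHS]mulnC mulnA.
case/orP: odd_sk => [odd_s | odd_k].
- rewrite -(mulrn_odd S2 odd_s) S_rows -mulrnA (MRS_filled_count rows cols).
  by rewrite cardG' mulrn_card.
- by rewrite -(mulrn_odd S2 odd_k) S_cols -mulrnA cardG' mulrn_card.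
Qed.
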